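(* Let $R$ be an integral domain and $p,q\in R$. The matrix $\begin{pmatrix} p & q\\ 0 & 0\end{pmatrix}$ is a product of idempotent $2\times 2$ matrices over $R$ if and only if $\begin{pmatrix} q & p\\ 0 & 0\end{pmatrix}$ is a product of idempotent $2\times 2$ matrices over $R$.
   Context: A matrix $E$ over $R$ is idempotent if $E^2=E$. ''Product of idempotent matrices'' means a finite product of idempotent $2\times2$ matrices with entries in $R$. *)

From HB Require Import structures.
From mathcomp Require Import all_boot all_order all_algebra.
Set Implicit Arguments. Unset Strict Implicit. Unset Printing Implicit Defensive.
Import GRing.Theory.
Local Open Scope ring_scope.

Definition idempotent_mx (R : pzRingType) (n : nat) (E : 'M[R]_n) : Prop :=
  E *m E = E.

Definition prod_idempotents (R : pzRingType) (n : nat) (M : 'M[R]_n) : Prop :=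
  exists s : seq 'M[R]_n,
    (forall E, E \in s -> idempotent_mx E) /\
    M = foldr (fun A B => A *m B) 1%:M s.

Definition row_top (R : pzRingType) (a b : R) : 'M[R]_2 :=
  \matrix_(i < 2, j < 2)
    (if (i : nat) == 0%N then (if (j : nat) == 0%N then a else b) else 0).

(* Conjugating by the swap matrix P = ((0,1),(1,0)) preserves idempotents and
   maps row_top p q to ((0,0),(q,p)); multiplying on the left by the
   idempotent row_top 1 1 then moves this row back up, giving row_top q p.
   The argument works over any ring. *)

From HB Require Import structures.
From mathcomp Require Import all_boot all_order all_algebra.
Set Implicit Arguments. Unset Strict Implicit. Unset Printing Implicit Defensive.
Local Open Scope ring_scope.
Import GRing.Theory.

Section Conjugation.
Variables (R : pzRingType) (n : nat) (P Q : 'M[R]_n).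
Hypotheses (PQ : P *m Q = 1%:M) (QP : Q *m P = 1%:M).

Lemma idempotent_mx_conj (E : 'M[R]_n) :
  idempotent_mx E -> idempotent_mx (P *m E *m Q).
Proof.
rewrite /idempotent_mx => EE.
by rewrite !mulmxA -(mulmxA _ Q P) QP mulmx1 -(mulmxA _ E E) EE.
Qed.

Lemma foldr_mulmx_conj (s : seq 'M[R]_n) :
  foldr (fun A B => A *m B) 1%:M [seq P *m E *m Q | E <- s] =
  P *m foldr (fun A B => A *m B) 1%:M s *m Q.
Proof.
elim: s => [|E s IHs] /=; first by rewrite mulmx1 PQ.
by rewrite IHs !mulmxA -(mulmxA _ Q P) QP mulmx1.
Qed.

Lemma prod_idempotents_conj (M : 'M[R]_n) :
  prod_idempotents M -> prod_idempotents (P *m M *m Q).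
Proof.
case=> s [s_idem ->]; exists [seq P *m E *m Q | E <- s]; split.
  by move=> _ /mapP [E sE ->]; exact/idempotent_mx_conj/s_idem.
by rewrite foldr_mulmx_conj.
Qed.

End Conjugation.

Lemma prod_idempotents_mull (R : pzRingType) (n : nat) (E M : 'M[R]_n) :
  idempotent_mx E -> prod_idempotents M -> prod_idempotents (E *m M).
Proof.
move=> E_idem [s [s_idem ->]]; exists (E :: s); split=> //.
by move=> F; rewrite inE => /predU1P [-> | /s_idem].
Qed.

Section RowTop.
Variable R : pzRingType.

Definition swap_mx : 'M[R]_2 :=
  \matrix_(i < 2, j < 2) (if i == j then 0 else 1).

Ltac mx2_eq := apply/matrixP; case=> [[|[|?]] ?] //; case=> [[|[|?]] ?] //;
  rewrite !mxE ?big_ord_recl ?big_ord0 /= !mxE /=;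
  do 3 (rewrite ?big_ord_recl ?big_ord0 /= ?mxE /=);
  rewrite ?mulr0 ?mul0r ?mulr1 ?mul1r ?addr0 ?add0r.

Lemma swap_mxK : swap_mx *m swap_mx = 1%:M.
Proof. by mx2_eq. Qed.

Lemma idempotent_row_top1 (b : R) : idempotent_mx (row_top 1 b).
Proof. by rewrite /idempotent_mx; mx2_eq. Qed.

Lemma row_top11_mul_swap_conj (p q : R) :
  row_top 1 1 *m (swap_mx *m row_top p q *m swap_mx) = row_top q p.
Proof. by mx2_eq. Qed.

Lemma prod_idempotents_row_top_swap (p q : R) :
  prod_idempotents (row_top p q) -> prod_idempotents (row_top q p).
Proof.
move=> /(prod_idempotents_conj swap_mxK swap_mxK).
by move/(prod_idempotents_mull (idempotent_row_top1 1)); rewrite row_top11_mul_swap_conj.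
Qed.

End RowTop.

Theorem lemma3p1 (R : idomainType) (p q : R) :
  prod_idempotents (row_top p q) <-> prod_idempotents (row_top q p).
Proof. by split; apply: prod_idempotents_row_top_swap. Qed.
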